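(* Let $G$ be an almost simple primitive permutation group on $\Omega$ with a normal subgroup $G_0$, and let $\omega\in\Omega$. If $K$ is a fixer of $G$ with $|K|\geqslant|G_\omega|$, then $K_0:=K\cap G_0$ is a fixer of $G_0$ (acting on $\Omega$) with $|K_0|\geqslant|(G_0)_\omega|$.
   Context: A subgroup $K$ of a permutation group $G\leqslant\mathrm{Sym}(\Omega)$ is a fixer if every element of $K$ fixes at least one point of $\Omega$. *)

From mathcomp Require Import all_boot all_fingroup all_solvable.
Set Implicit Arguments. Unset Strict Implicit. Unset Printing Implicit Defensive.
Local Open Scope group_scope.

Definition fixer (T : finType) (K : {set {perm T}}) : Prop :=
  forall k, k \in K -> exists x : T, k x = x.

(* G is almost simple: G has a nonabelian simple normal subgroup N with
   trivial centraliser in G (so N <= G <= Aut N). *)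
Definition almost_simple (gT : finGroupType) (G : {set gT}) : Prop :=
  exists N : {group gT},
    [/\ N <| G, simple N, ~~ abelian N & 'C_G(N) = 1].

From mathcomp Require Import all_boot all_fingroup all_solvable.
Set Implicit Arguments. Unset Strict Implicit. Unset Printing Implicit Defensive.
Local Open Scope group_scope.

(* A normal subgroup G0 of a primitive group G is trivial or transitive. If it
   is transitive, the Frattini argument G = G_w G0 gives
   |(G0)_w| / |G0| = |G_w| / |G|, while K G0 <= G gives
   |K| / |G| <= |K :&: G0| / |G0|; combining the two yields the bound. *)

Lemma fixerS (T : finType) (A B : {set {perm T}}) :
  A \subset B -> fixer B -> fixer A.
Proof. by move=> sAB fixB k /(subsetP sAB); apply: fixB. Qed.

Lemma card_mulG_leq (gT : finGroupType) (G H K : {group gT}) :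
  K \subset G -> H \subset G -> (#|K| * #|H| <= #|G| * #|K :&: H|)%N.
Proof.
by move=> sKG sHG; rewrite mul_cardG leq_mul2r subset_leq_card ?mul_subG ?orbT.
Qed.

Lemma card_astab1_transitive_subgroup (aT : finGroupType) (rT : finType)
    (to : {action aT &-> rT}) (G H : {group aT}) (S : {set rT}) (x : rT) :
    x \in S -> H \subset G ->
    [transitive G, on S | to] -> [transitive H, on S | to] ->
  (#|'C_G[x | to]| * #|H| = #|G| * #|'C_H[x | to]|)%N.
Proof.
move=> Sx sHG trG trH.
have stabI : 'C_G[x | to] :&: H = 'C_H[x | to].
  by rewrite setIAC (setIidPr sHG) setIC.
by rewrite mul_cardG (subgroup_transitiveP Sx sHG trG trH) stabI.
Qed.

Lemma card_astab1_leq_cardI (aT : finGroupType) (rT : finType)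
    (to : {action aT &-> rT}) (G H K : {group aT}) (S : {set rT}) (x : rT) :
    x \in S -> H \subset G -> K \subset G ->
    [transitive G, on S | to] -> [transitive H, on S | to] ->
    (#|'C_G[x | to]| <= #|K|)%N ->
  (#|'C_H[x | to]| <= #|K :&: H|)%N.
Proof.
move=> Sx sHG sKG trG trH leGxK.
rewrite -(leq_pmul2l (cardG_gt0 G)).
rewrite -(card_astab1_transitive_subgroup Sx sHG trG trH).
by apply: leq_trans (card_mulG_leq sKG sHG); rewrite leq_mul2r leGxK orbT.
Qed.

Lemma prim_normal_perm_trivial_or_transitive (T : finType)
    (G N : {group {perm T}}) :
    [primitive G, on [set: T] | 'P] -> N <| G ->
  N :=: 1 \/ [transitive N, on [set: T] | 'P].
Proof.
move=> primG nNG.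
case: (prim_trans_norm primG nNG) => [sNC | trN]; last by right.
left; apply/trivgP; apply: subset_trans (aperm_faithful G).
by apply: subset_trans sNC _; rewrite setIS.
Qed.

Theorem lemma2p5 (T : finType) (G G0 K : {group {perm T}}) (w : T) :
  almost_simple G ->
  [primitive G, on [set: T] | 'P] ->
  G0 <| G ->
  K \subset G ->
  fixer K ->
  #|'C_G[w | 'P]| <= #|K| ->
  fixer (K :&: G0) /\ #|'C_G0[w | 'P]| <= #|K :&: G0|.
Proof.
move=> _ primG nG0G sKG fixK leGwK.
split; first exact: fixerS (subsetIl K G0) fixK.
have trG : [transitive G, on [set: T] | 'P] by case/andP: primG.
case: (prim_normal_perm_trivial_or_transitive primG nG0G) => [G0_1 | trG0].
  have -> : 'C_G0[w | 'P] = 1 by apply/trivgP; rewrite -G0_1 subsetIl.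
  by rewrite cards1 cardG_gt0.
exact: card_astab1_leq_cardI (in_setT w) (normal_sub nG0G) sKG trG trG0 leGwK.
Qed.
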